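(* Let $N\geq 10^{100000}$ be a real number and $f_N(x)=\dfrac{\log N+\log(x-1)}{\log x}$ for real $x>1$. Let $M\geq 10^5$ be a real number. Then for every $x$ with $M\leq x\leq 2M$ and every $1\leq k\leq 6$, $$0.999999<\frac{f_N^{(k)}(M)}{f_N^{(k)}(x)}<\gamma_k,$$ where $\gamma_1=2.24808$, $\gamma_2=4.53426$, $\gamma_3=9.11515$, $\gamma_4=18.2994$, $\gamma_5=36.7099$, $\gamma_6=73.6077$.
   Context: $f_N^{(k)}$ denotes the $k$-th derivative of $f_N$; $\log$ is the natural logarithm. *)

From Stdlib Require Import Reals ZArith.
From Coquelicot Require Import Coquelicot.
Open Scope R_scope.

(* Outside x > 1 the total Stdlib ln gives junk values, but derivatives at
   points x > 1 only depend on the function near x, where it is the true f_N. *)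
Definition fN (N x : R) : R := (ln N + ln (x - 1)) / ln x.

Definition gamma (k : nat) : R :=
  match k with
  | 1%nat => 2.24808
  | 2%nat => 4.53426
  | 3%nat => 9.11515
  | 4%nat => 18.2994
  | 5%nat => 36.7099
  | 6%nat => 73.6077
  | _ => 0
  end.

(* Every derivative of f_N has the closed form
     f_N^(k)(x) = (-1)^k x^(-k) ((ln N + ln (1 - 1/x)) S_k(1/ln x) - T_k(1/(x-1), 1/ln x)),
   where S_k is the polynomial with (1/ln)^(k)(x) = (-1)^k x^(-k) S_k(1/ln x) and the
   small term T_k collects the derivatives of ln (1 - 1/x).  For x >= 10^5 the term T_k
   is below S_k/100 and ln (1 - 1/x) is negligible against ln N >= 230258, so
   f_N^(k)(M)/f_N^(k)(x) is (x/M)^k S_k(1/ln M)/S_k(1/ln x) up to a relative error of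
   order 10^-7.  The lower bound follows from x >= M.  For the upper bound, x <= 2M gives
   (x/M)^k <= 2^k and ln x <= ln M + ln 2; since S_k has nonnegative coefficients, the
   ratio S_k(1/a)/S_k(1/(a + ln 2)) decreases in a, so it is largest at a = ln 10^5,
   where gamma_k is checked numerically. *)

From Stdlib Require Import Reals ZArith.
From Coquelicot Require Import Coquelicot.
From Stdlib Require Import Lra Lia List.
Import ListNotations.
Open Scope R_scope.

(** * Polynomials with nonnegative coefficients *)

Fixpoint msum (m : list (R * nat)) (t : R) : R :=
  match m with
  | [] => 0
  | (c, p) :: m' => c * t ^ p + msum m' t
  end.

Definition nonneg_coefs (m : list (R * nat)) : Prop := Forall (fun cp => 0 <= fst cp) m.

Definition pos_exponents (m : list (R * nat)) : Prop := Forall (fun cp => (1 <= snd cp)%nat) m.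

Lemma msum_nonneg m t : nonneg_coefs m -> 0 <= t -> 0 <= msum m t.
Proof.
  intros Hm Ht; induction Hm as [|[c p] m Hc Hm IH]; simpl in *; [lra|].
  assert (0 <= c * t ^ p) by (apply Rmult_le_pos; [lra | apply pow_le; lra]).
  lra.
Qed.

Lemma msum_le_compat m t1 t2 : nonneg_coefs m -> 0 <= t1 <= t2 -> msum m t1 <= msum m t2.
Proof.
  intros Hm Ht; induction Hm as [|[c p] m Hc Hm IH]; simpl in *; [lra|].
  assert (c * t1 ^ p <= c * t2 ^ p) by (apply Rmult_le_compat_l; [lra | apply pow_incr; lra]).
  lra.
Qed.

Lemma msum_cons_ge c p m t : nonneg_coefs m -> 0 <= t -> c * t ^ p <= msum ((c, p) :: m) t.
Proof. intros Hm Ht; simpl; pose proof (msum_nonneg m t Hm Ht); lra. Qed.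

Lemma msum_le_linear m t r :
  nonneg_coefs m -> pos_exponents m -> 0 <= t <= r -> r * msum m t <= t * msum m r.
Proof.
  intros Hc Hp Ht; induction Hc as [|[c p] m Hc' Hc IH];
    inversion_clear Hp as [|? ? Hp1 Hp']; simpl in *.
  - lra.
  - replace p with (S (p - 1)) by lia; simpl.
    assert (t ^ (p - 1) <= r ^ (p - 1)) by (apply pow_incr; lra).
    assert (0 <= c * t) by (apply Rmult_le_pos; lra).
    assert (c * t * t ^ (p - 1) * r <= c * t * r ^ (p - 1) * r)
      by (apply Rmult_le_compat_r; [lra | apply Rmult_le_compat_l; lra]).
    specialize (IH Hp'); nra.
Qed.

(* Expand (U^r - X^r) (U^r - Y^r) >= 0 and use X^r Y^r <= U^r V^r. *)
Lemma pow_sum_le r X Y U V :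
  0 < V -> V <= X <= U -> V <= Y <= U -> X * Y <= U * V -> X ^ r + Y ^ r <= U ^ r + V ^ r.
Proof.
  intros HV HX HY HXY.
  assert (0 < U ^ r) by (apply pow_lt; lra).
  assert (X ^ r <= U ^ r) by (apply pow_incr; lra).
  assert (Y ^ r <= U ^ r) by (apply pow_incr; lra).
  assert (X ^ r * Y ^ r <= U ^ r * V ^ r).
  { rewrite <- !Rpow_mult_distr; apply pow_incr; split; [apply Rmult_le_pos|]; lra. }
  assert (0 <= (U ^ r - X ^ r) * (U ^ r - Y ^ r)) by (apply Rmult_le_pos; lra).
  apply Rmult_le_reg_l with (U ^ r); nra.
Qed.

Lemma monomial_pair_le p q X Y U V :
  0 < V -> V <= X <= U -> V <= Y <= U -> X * Y <= U * V ->
  X ^ p * Y ^ q + X ^ q * Y ^ p <= U ^ p * V ^ q + U ^ q * V ^ p.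
Proof.
  intros HV HX HY HXY.
  assert (Hshift : forall p r, X ^ p * Y ^ (p + r) + X ^ (p + r) * Y ^ p
                              <= U ^ p * V ^ (p + r) + U ^ (p + r) * V ^ p).
  { intros n r; rewrite !pow_add.
    replace (X ^ n * (Y ^ n * Y ^ r) + X ^ n * X ^ r * Y ^ n)
      with ((X * Y) ^ n * (X ^ r + Y ^ r)) by (rewrite Rpow_mult_distr; ring).
    replace (U ^ n * (V ^ n * V ^ r) + U ^ n * U ^ r * V ^ n)
      with ((U * V) ^ n * (U ^ r + V ^ r)) by (rewrite Rpow_mult_distr; ring).
    assert (0 <= X ^ r) by (apply pow_le; lra).
    assert (0 <= Y ^ r) by (apply pow_le; lra).
    apply Rmult_le_compat.
    - apply pow_le, Rmult_le_pos; lra.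
    - lra.
    - apply pow_incr; split; [apply Rmult_le_pos|]; lra.
    - apply pow_sum_le; assumption. }
  destruct (Nat.le_ge_cases p q).
  - replace q with (p + (q - p))%nat by lia; apply Hshift.
  - replace p with (q + (p - q))%nat by lia; specialize (Hshift q (p - q)%nat); lra.
Qed.

Lemma monomial_msum_cross_le p m X Y U V :
  0 < V -> V <= X <= U -> V <= Y <= U -> X * Y <= U * V -> nonneg_coefs m ->
  X ^ p * msum m Y + msum m X * Y ^ p <= U ^ p * msum m V + msum m U * V ^ p.
Proof.
  intros HV HX HY HXY Hm; induction Hm as [|[d q] m Hd Hm IH]; simpl in *; [lra|].
  pose proof (monomial_pair_le p q X Y U V HV HX HY HXY).
  assert (d * (X ^ p * Y ^ q + X ^ q * Y ^ p) <= d * (U ^ p * V ^ q + U ^ q * V ^ p))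
    by (apply Rmult_le_compat_l; lra).
  lra.
Qed.

Lemma msum_cross_le m1 m2 X Y U V :
  0 < V -> V <= X <= U -> V <= Y <= U -> X * Y <= U * V ->
  nonneg_coefs m1 -> nonneg_coefs m2 ->
  msum m1 X * msum m2 Y + msum m2 X * msum m1 Y <= msum m1 U * msum m2 V + msum m2 U * msum m1 V.
Proof.
  intros HV HX HY HXY H1 H2; induction H1 as [|[c p] m1 Hc H1 IH]; simpl in *; [lra|].
  pose proof (monomial_msum_cross_le p m2 X Y U V HV HX HY HXY H2).
  assert (c * (X ^ p * msum m2 Y + msum m2 X * Y ^ p)
          <= c * (U ^ p * msum m2 V + msum m2 U * V ^ p)) by (apply Rmult_le_compat_l; lra).
  lra.
Qed.

Lemma msum_inv_shift_le m a0 a h :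
  nonneg_coefs m -> 0 < a0 <= a -> 0 < h ->
  msum m (/ a) * msum m (/ (a0 + h)) <= msum m (/ a0) * msum m (/ (a + h)).
Proof.
  intros Hm Ha Hh.
  assert (0 < / (a + h)) by (apply Rinv_0_lt_compat; lra).
  assert (/ (a + h) <= / a <= / a0) by (split; apply Rinv_le_contravar; lra).
  assert (/ (a + h) <= / (a0 + h) <= / a0) by (split; apply Rinv_le_contravar; lra).
  assert (/ a * / (a0 + h) <= / a0 * / (a + h)).
  { rewrite <- !Rinv_mult; apply Rinv_le_contravar; [apply Rmult_lt_0_compat|]; nra. }
  pose proof (msum_cross_le m m (/ a) (/ (a0 + h)) (/ a0) (/ (a + h))); intuition lra.
Qed.

Lemma msum_ratio_lt m a0 a h g0 g :
  nonneg_coefs m -> 0 < a0 <= a -> 0 < h -> 0 <= g0 ->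
  0 < msum m (/ (a0 + h)) -> 0 < msum m (/ (a + h)) ->
  g0 * msum m (/ a0) < g * msum m (/ (a0 + h)) ->
  g0 * msum m (/ a) < g * msum m (/ (a + h)).
Proof.
  intros Hm Ha Hh Hg0 P0 P Hlt.
  pose proof (msum_inv_shift_le m a0 a h Hm Ha Hh) as Hshift.
  apply Rmult_lt_reg_r with (msum m (/ (a0 + h))); [lra|].
  apply Rle_lt_trans with (g0 * msum m (/ a0) * msum m (/ (a + h))).
  - rewrite !Rmult_assoc; apply Rmult_le_compat_l; lra.
  - assert (g0 * msum m (/ a0) * msum m (/ (a + h)) < g * msum m (/ (a0 + h)) * msum m (/ (a + h)))
      by (apply Rmult_lt_compat_r; assumption).
    lra.
Qed.

(** * The derivatives of f_N *)

(* S_0(t) = t and S_(k+1)(t) = k S_k(t) + t^2 S_k'(t), so that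
   (1/ln)^(k)(x) = (-1)^k x^(-k) S_k(1/ln x). *)
Definition invln_monomials (k : nat) : list (R * nat) :=
  match k with
  | 0%nat => [(1, 1%nat)]
  | 1%nat => [(1, 2%nat)]
  | 2%nat => [(1, 2%nat); (2, 3%nat)]
  | 3%nat => [(2, 2%nat); (6, 3%nat); (6, 4%nat)]
  | 4%nat => [(6, 2%nat); (22, 3%nat); (36, 4%nat); (24, 5%nat)]
  | 5%nat => [(24, 2%nat); (100, 3%nat); (210, 4%nat); (240, 5%nat); (120, 6%nat)]
  | 6%nat => [(120, 2%nat); (548, 3%nat); (1350, 4%nat); (2040, 5%nat); (1800, 6%nat); (720, 7%nat)]
  | _ => []
  end.

Definition invln_poly (k : nat) : R -> R := msum (invln_monomials k).

(* The pairs (C(k,j) (j-1)!, j) for 1 <= j <= k: the j-th derivative of ln (1 - 1/x) is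
   (-1)^(j-1) (j-1)! x^(-j) ((x/(x-1))^j - 1), and x/(x-1) = 1 + d with d = 1/(x-1). *)
Definition leibniz_coefs (k : nat) : list (R * nat) :=
  match k with
  | 1%nat => [(1, 1%nat)]
  | 2%nat => [(2, 1%nat); (1, 2%nat)]
  | 3%nat => [(3, 1%nat); (3, 2%nat); (2, 3%nat)]
  | 4%nat => [(4, 1%nat); (6, 2%nat); (8, 3%nat); (6, 4%nat)]
  | 5%nat => [(5, 1%nat); (10, 2%nat); (20, 3%nat); (30, 4%nat); (24, 5%nat)]
  | 6%nat => [(6, 1%nat); (15, 2%nat); (40, 3%nat); (90, 4%nat); (144, 5%nat); (120, 6%nat)]
  | _ => []
  end.

Fixpoint leibniz_sum (k : nat) (l : list (R * nat)) (e : nat -> R) (t : R) : R :=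
  match l with
  | [] => 0
  | (a, j) :: l' => a * e j * invln_poly (k - j) t + leibniz_sum k l' e t
  end.

Definition leibniz_tail (k : nat) (d t : R) : R :=
  leibniz_sum k (leibniz_coefs k) (fun j => (1 + d) ^ j - 1) t.

(* f_N - 1 = fN_numer (ln N) x / ln x. *)
Definition fN_numer (L y : R) : R := L + ln (y - 1) - ln y.

Definition fN_core (k : nat) (L y : R) : R :=
  fN_numer L y * invln_poly k (/ ln y) - leibniz_tail k (/ (y - 1)) (/ ln y).

Definition fN_deriv (k : nat) (L y : R) : R := (-1) ^ k / y ^ k * fN_core k L y.

Lemma ln_pos_of_gt1 x : 1 < x -> 0 < ln x.
Proof. intro; rewrite <- ln_1; apply ln_increasing; lra. Qed.

Ltac solve_derive_side :=
  repeat split; try lra; repeat apply Rmult_integral_contrapositive_currified; lra.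

Lemma is_derive_fN N x : 1 < x -> is_derive (fN N) x (fN_deriv 1 (ln N) x).
Proof.
  intro Hx; assert (0 < ln x) by (apply ln_pos_of_gt1; exact Hx).
  unfold fN, fN_deriv, fN_core, fN_numer, leibniz_tail; simpl; unfold invln_poly; simpl.
  auto_derive; [solve_derive_side|].
  unfold Rminus; field; solve_derive_side.
Qed.

Lemma is_derive_fN_deriv k L x :
  (1 <= k <= 5)%nat -> 1 < x -> is_derive (fN_deriv k L) x (fN_deriv (S k) L x).
Proof.
  intros Hk Hx; assert (0 < ln x) by (apply ln_pos_of_gt1; exact Hx).
  destruct k as [|[|[|[|[|[|k]]]]]]; try lia;
    unfold fN_deriv, fN_core, fN_numer, leibniz_tail; simpl; unfold invln_poly; simpl;
    (auto_derive; [solve_derive_side|]);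
    unfold Rminus; field; solve_derive_side.
Qed.

Lemma Derive_n_fN N k x :
  (1 <= k <= 6)%nat -> 1 < x -> Derive_n (fN N) k x = fN_deriv k (ln N) x.
Proof.
  revert x; induction k as [|k IH]; intros x Hk Hx; [lia|].
  destruct k as [|k].
  - apply is_derive_unique, is_derive_fN, Hx.
  - simpl; rewrite (Derive_ext_loc _ (fN_deriv (S k) (ln N))).
    + apply is_derive_unique, is_derive_fN_deriv; [lia | exact Hx].
    + apply (locally_open (fun t => 1 < t)); [apply open_gt | | exact Hx].
      intros t Ht; apply IH; [lia | exact Ht].
Qed.

Lemma invln_monomials_nonneg k : nonneg_coefs (invln_monomials k).
Proof.
  destruct k as [|[|[|[|[|[|[|k]]]]]]];
    repeat (apply Forall_cons; [simpl; lra |]); apply Forall_nil.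
Qed.

Lemma invln_monomials_pos_exponents k : pos_exponents (invln_monomials k).
Proof. destruct k as [|[|[|[|[|[|[|k]]]]]]]; repeat constructor. Qed.

Lemma invln_poly_ge k t :
  (1 <= k <= 6)%nat -> 0 <= t -> INR (fact (k - 1)) * t ^ 2 <= invln_poly k t.
Proof.
  intros Hk Ht.
  destruct k as [|[|[|[|[|[|[|k]]]]]]]; try lia; unfold invln_poly, invln_monomials;
    (eapply Rle_trans; [| apply msum_cons_ge; [| exact Ht]]);
    solve [simpl; lra | repeat (apply Forall_cons; [simpl; lra |]); apply Forall_nil].
Qed.

Lemma invln_poly_pos k t : (1 <= k <= 6)%nat -> 0 < t -> 0 < invln_poly k t.
Proof.
  intros Hk Ht; eapply Rlt_le_trans; [| apply invln_poly_ge; [exact Hk | lra]].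
  apply Rmult_lt_0_compat; [apply lt_0_INR, lt_O_fact | apply pow_lt, Ht].
Qed.

Lemma pow_1plus_sub1_le d j : 0 <= d -> INR j * d <= 1/2 -> 0 <= (1 + d) ^ j - 1 <= 2 * d * INR j.
Proof.
  intros Hd; induction j as [|j IH]; intros Hj; [simpl; lra|].
  rewrite S_INR in *; simpl pow.
  assert (0 <= INR j) by apply pos_INR.
  specialize (IH ltac:(nra)); nra.
Qed.

Lemma leibniz_sum_le k l e c t :
  0 <= t <= 1/10 ->
  Forall (fun aj => 0 <= fst aj /\ 0 <= e (snd aj) <= c * INR (snd aj)) l ->
  0 <= leibniz_sum k l e t <= 10 * c * t * leibniz_sum k l INR (1/10).
Proof.
  intros Ht Hl; induction Hl as [|[a j] l [Ha He] Hl IH]; simpl in *; [lra|].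
  pose proof (msum_nonneg _ t (invln_monomials_nonneg (k - j)) ltac:(lra)).
  pose proof (msum_le_linear _ t (1/10) (invln_monomials_nonneg (k - j))
                (invln_monomials_pos_exponents (k - j)) ltac:(lra)).
  fold (invln_poly (k - j)) in *.
  assert (0 <= a * e j * invln_poly (k - j) t)
    by (apply Rmult_le_pos; [apply Rmult_le_pos|]; lra).
  assert (a * e j * invln_poly (k - j) t
          <= a * (c * INR j) * (10 * t * invln_poly (k - j) (1/10))).
  { apply Rmult_le_compat; [apply Rmult_le_pos; lra | lra | apply Rmult_le_compat_l; lra | lra]. }
  lra.
Qed.

Lemma leibniz_tail_le k d t :
  (1 <= k <= 6)%nat -> 0 < t <= 1/10 -> 0 <= d <= 12/100000 * t ->
  0 <= leibniz_tail k d t <= invln_poly k t / 100.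
Proof.
  intros Hk Ht Hd.
  assert (Hdt : d * t <= 12/100000 * t ^ 2) by nra.
  pose proof (invln_poly_ge k t Hk ltac:(lra)) as Hlow.
  assert (HT : 0 <= leibniz_tail k d t
               <= 10 * (2 * d) * t * leibniz_sum k (leibniz_coefs k) INR (1/10)).
  { apply leibniz_sum_le; [lra|].
    destruct k as [|[|[|[|[|[|[|k]]]]]]]; try lia; unfold leibniz_coefs;
      repeat (apply Forall_cons; [split; [simpl; lra | apply pow_1plus_sub1_le; simpl; lra] |]);
      apply Forall_nil. }
  set (T := leibniz_tail k d t) in *; set (St := invln_poly k t) in *.
  destruct k as [|[|[|[|[|[|[|k]]]]]]]; try lia;
    simpl in HT; unfold invln_poly in HT; simpl in Hdt, HT, Hlow; lra.
Qed.

(** * Numerical bounds on logarithms *)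

(* y^m / m!, computed with binary integer literals so that partial sums of the
   exponential series evaluate to rationals under [simpl]. *)
Fixpoint exp_term (y : R) (m : nat) : R :=
  match m with
  | O => 1
  | S m' => exp_term y m' * y / IZR (Z.of_nat m)
  end.

Lemma exp_term_eq y m : exp_term y m = y ^ m / INR (fact m).
Proof.
  induction m as [|m IH]; [simpl; field|].
  cbn [exp_term]; rewrite IH, <- INR_IZR_INZ, fact_simpl, mult_INR.
  pose proof (INR_fact_neq_0 m); pose proof (not_0_INR (S m) (Nat.neq_succ_0 m)).
  simpl pow; field; auto.
Qed.

Lemma Derive_n_exp n x : Derive_n exp n x = exp x.
Proof.
  revert x; induction n as [|n IH]; intro x; [reflexivity|].
  simpl; rewrite (Derive_ext _ exp _ IH); apply is_derive_unique, is_derive_exp.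
Qed.

Lemma exp_le_partial_sum y n :
  0 < y -> exp y * (1 - exp_term y (S n)) <= sum_f_R0 (exp_term y) n.
Proof.
  intro Hy.
  destruct (Taylor_Lagrange exp n 0 y Hy) as [z [[Hz0 Hzy] Hexp]].
  { intros t _ k _; destruct k; [exact I|].
    apply ex_derive_ext with (f := exp); [intro; symmetry; apply Derive_n_exp|].
    eexists; apply is_derive_exp. }
  rewrite Rminus_0_r, Derive_n_exp in Hexp.
  rewrite (sum_eq _ (fun m => y ^ m / INR (fact m) * Derive_n exp m 0))
    by (intros; rewrite Derive_n_exp, exp_0, exp_term_eq; ring).
  rewrite exp_term_eq.
  assert (exp z < exp y) by (apply exp_increasing; exact Hzy).
  assert (0 < y ^ S n / INR (fact (S n)))
    by (apply Rdiv_lt_0_compat; [apply pow_lt, Hy | apply lt_0_INR, lt_O_fact]).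
  nra.
Qed.

Lemma ln_ge_of_partial_sum c z n :
  0 < c -> 0 < 1 - exp_term c (S n) ->
  sum_f_R0 (exp_term c) n <= z * (1 - exp_term c (S n)) -> c <= ln z.
Proof.
  intros Hc Hr Hsum.
  pose proof (exp_le_partial_sum c n Hc).
  assert (exp c <= z) by (apply Rmult_le_reg_r with (1 - exp_term c (S n)); lra).
  rewrite <- (ln_exp c); apply ln_le; [apply exp_pos | assumption].
Qed.

Lemma ln_le_of_partial_sum c z n : 0 <= c -> 0 < z -> z <= sum_f_R0 (exp_term c) n -> ln z <= c.
Proof.
  intros Hc Hz Hsum.
  pose proof (exp_ge_taylor c n Hc) as Hexp.
  rewrite (sum_eq _ (exp_term c)) in Hexp by (intros; symmetry; apply exp_term_eq).
  rewrite <- (ln_exp c); apply ln_le; lra.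
Qed.

Lemma ln_le_sub1 z : 0 < z -> ln z <= z - 1.
Proof.
  intro Hz; pose proof (exp_ineq1_le (z - 1)).
  rewrite <- (ln_exp (z - 1)); apply ln_le; lra.
Qed.

Lemma ln2_bounds : 0.6931471 <= ln 2 <= 0.6931472.
Proof.
  split.
  - apply (ln_ge_of_partial_sum _ _ 11); simpl; lra.
  - apply (ln_le_of_partial_sum _ _ 11); simpl; lra.
Qed.

Lemma ln10_bounds : 2.302584 <= ln 10 <= 2.33.
Proof.
  assert (H54 : 0.223143 <= ln (5/4) <= 1/4).
  { split; [apply (ln_ge_of_partial_sum _ _ 7); simpl; lra|].
    pose proof (ln_le_sub1 (5/4)); lra. }
  replace 10 with (2 * (2 * (2 * (5/4)))) by field.
  rewrite !ln_mult by lra.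
  pose proof ln2_bounds; lra.
Qed.

Lemma ln_1e5_bounds : 11.51292 <= ln 100000 <= 11.65.
Proof.
  replace 100000 with (10 ^ 5) by ring; rewrite ln_pow by lra; simpl INR.
  pose proof ln10_bounds; lra.
Qed.

Lemma ln_N_ge N : IZR (10 ^ 100000)%Z <= N -> 230258 <= ln N.
Proof.
  assert (E : IZR (10 ^ 100000)%Z = 10 ^ Z.to_nat 100000)
    by (rewrite pow_IZR, Z2Nat.id by lia; reflexivity).
  rewrite E; clear E.
  assert (Hn : INR (Z.to_nat 100000) = 100000)
    by (rewrite INR_IZR_INZ, Z2Nat.id by lia; reflexivity).
  revert Hn; generalize (Z.to_nat 100000); intros n Hn HN.
  assert (0 < 10 ^ n) by (apply pow_lt; lra).
  assert (ln (10 ^ n) <= ln N) by (apply ln_le; lra).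
  rewrite ln_pow, Hn in * by lra.
  pose proof ln10_bounds; lra.
Qed.

Lemma ln_le_linear y : 100000 <= y -> ln y <= 12/100000 * (y - 1).
Proof.
  intro Hy.
  assert (E : ln y = ln 100000 + ln (y / 100000))
    by (rewrite <- ln_mult by (try apply Rdiv_lt_0_compat; lra); f_equal; field).
  pose proof (ln_le_sub1 (y / 100000) ltac:(apply Rdiv_lt_0_compat; lra)).
  pose proof ln_1e5_bounds; lra.
Qed.

Lemma fN_numer_bounds L y : 1 < y -> L - / (y - 1) <= fN_numer L y <= L.
Proof.
  intro Hy; unfold fN_numer.
  assert (0 < / (y - 1)) by (apply Rinv_0_lt_compat; lra).
  split.
  - assert (E : ln y = ln (y - 1) + ln (1 + / (y - 1)))
      by (rewrite <- ln_mult by lra; f_equal; field; lra).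
    pose proof (ln_le_sub1 (1 + / (y - 1))); lra.
  - assert (ln (y - 1) <= ln y) by (apply ln_le; lra); lra.
Qed.

Lemma fN_numer_le_compat L y z : 1 < y <= z -> fN_numer L y <= fN_numer L z.
Proof.
  intro Hyz; unfold fN_numer.
  assert (ln (y - 1) + ln z <= ln (z - 1) + ln y)
    by (rewrite <- !ln_mult by lra; apply ln_le; nra).
  lra.
Qed.

Lemma fN_core_bounds k L y :
  (1 <= k <= 6)%nat -> 100000 <= y ->
  (fN_numer L y - 1/100) * invln_poly k (/ ln y) <= fN_core k L y
  <= fN_numer L y * invln_poly k (/ ln y).
Proof.
  intros Hk Hy.
  pose proof ln_1e5_bounds.
  assert (ln 100000 <= ln y) by (apply ln_le; lra).
  assert (Ht : 0 < / ln y <= 1/10).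
  { split; [apply Rinv_0_lt_compat; lra|].
    replace (1/10) with (/ 10) by field; apply Rinv_le_contravar; lra. }
  assert (Hd : 0 <= / (y - 1) <= 12/100000 * / ln y).
  { pose proof (ln_le_linear y Hy).
    split; [left; apply Rinv_0_lt_compat; lra|].
    replace (12/100000 * / ln y) with (/ (ln y / (12/100000))) by (field; lra).
    apply Rinv_le_contravar; lra. }
  pose proof (leibniz_tail_le k _ _ Hk Ht Hd).
  unfold fN_core; lra.
Qed.

Lemma fN_core_pos k L y :
  (1 <= k <= 6)%nat -> 1 <= L -> 100000 <= y -> 0 < fN_core k L y.
Proof.
  intros Hk HL Hy.
  pose proof (fN_core_bounds k L y Hk Hy) as [Hlow _].
  pose proof (fN_numer_bounds L y ltac:(lra)) as [HB _].
  assert (/ (y - 1) <= 1/99999)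
    by (replace (1/99999) with (/ 99999) by field; apply Rinv_le_contravar; lra).
  assert (Ht : 0 < / ln y) by (apply Rinv_0_lt_compat, ln_pos_of_gt1; lra).
  pose proof (invln_poly_pos k _ Hk Ht).
  apply Rlt_le_trans with (2 := Hlow), Rmult_lt_0_compat; lra.
Qed.

Lemma invln_poly_ratio_lt k a :
  (1 <= k <= 6)%nat -> 11.51292 <= a ->
  2 ^ k * invln_poly k (/ a) < gamma k * (1 - / 20000000) * invln_poly k (/ (a + 0.6931472)).
Proof.
  intros Hk Ha.
  assert (Hpos : forall b, 0 < b -> 0 < invln_poly k (/ b))
    by (intros b Hb; apply invln_poly_pos, Rinv_0_lt_compat; assumption).
  apply (msum_ratio_lt _ 11.51292).
  - apply invln_monomials_nonneg.
  - lra.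
  - lra.
  - apply pow_le; lra.
  - apply Hpos; lra.
  - apply Hpos; lra.
  - destruct k as [|[|[|[|[|[|[|k]]]]]]]; try lia; unfold gamma, invln_poly; simpl; lra.
Qed.

Section Ratio.

Variables (k : nat) (L M x : R).
Hypothesis Hk : (1 <= k <= 6)%nat.
Hypothesis HL : 230258 <= L.
Hypothesis HM : 100000 <= M.
Hypothesis HMx : M <= x.

Let inv_ln_pos y : 100000 <= y -> 0 < / ln y.
Proof. intro; apply Rinv_0_lt_compat, ln_pos_of_gt1; lra. Qed.

Lemma fN_core_ratio_gt : 0.999999 < fN_core k L M / fN_core k L x.
Proof.
  pose proof (fN_core_bounds k L M Hk HM) as [HcM _].
  pose proof (fN_core_bounds k L x Hk ltac:(lra)) as [_ Hcx].
  pose proof (fN_numer_bounds L M ltac:(lra)) as [HBM _].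
  pose proof (fN_numer_bounds L x ltac:(lra)) as [HBx HBxL].
  assert (/ (M - 1) <= 1/99999)
    by (replace (1/99999) with (/ 99999) by field; apply Rinv_le_contravar; lra).
  assert (/ (x - 1) <= 1/99999)
    by (replace (1/99999) with (/ 99999) by field; apply Rinv_le_contravar; lra).
  pose proof (inv_ln_pos M HM) as HtM; pose proof (inv_ln_pos x ltac:(lra)) as Htx.
  assert (/ ln x <= / ln M)
    by (apply Rinv_le_contravar; [apply ln_pos_of_gt1; lra | apply ln_le; lra]).
  set (SM := invln_poly k (/ ln M)) in *; set (Sx := invln_poly k (/ ln x)) in *.
  assert (0 < SM) by (apply invln_poly_pos; assumption).
  assert (0 <= Sx) by (apply msum_nonneg; [apply invln_monomials_nonneg | lra]).
  assert (Sx <= SM) by (apply msum_le_compat; [apply invln_monomials_nonneg | lra]).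
  assert (fN_numer L x * Sx <= L * SM) by (apply Rmult_le_compat; lra).
  assert ((L - 0.0101) * SM <= (fN_numer L M - 1/100) * SM) by (apply Rmult_le_compat_r; lra).
  assert (0.999999 * L * SM < (L - 0.0101) * SM) by (apply Rmult_lt_compat_r; lra).
  apply (Rlt_div_r _ _ (fN_core k L x)); [apply fN_core_pos; [exact Hk | lra | lra] |].
  lra.
Qed.

Lemma fN_core_ratio_lt : x <= 2 * M -> 2 ^ k * (fN_core k L M / fN_core k L x) < gamma k.
Proof.
  intro Hx2M.
  pose proof (fN_core_bounds k L M Hk HM) as [_ HcM].
  pose proof (fN_core_bounds k L x Hk ltac:(lra)) as [Hcx _].
  pose proof (fN_numer_le_compat L M x ltac:(lra)) as HBMx.
  pose proof (fN_numer_bounds L x ltac:(lra)) as [HBx _].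
  assert (/ (x - 1) <= 1/99999)
    by (replace (1/99999) with (/ 99999) by field; apply Rinv_le_contravar; lra).
  pose proof ln_1e5_bounds; pose proof ln2_bounds.
  assert (Hln : 11.51292 <= ln M) by (pose proof (ln_le 100000 M); lra).
  assert (ln x <= ln M + 0.6931472).
  { assert (ln x <= ln (2 * M)) by (apply ln_le; lra).
    rewrite ln_mult in * by lra; lra. }
  pose proof (inv_ln_pos M HM) as HtM; pose proof (inv_ln_pos x ltac:(lra)) as Htx.
  assert (/ (ln M + 0.6931472) <= / ln x) by (apply Rinv_le_contravar; [apply ln_pos_of_gt1|]; lra).
  assert (0 < / (ln M + 0.6931472)) by (apply Rinv_0_lt_compat; lra).
  pose proof (invln_poly_ratio_lt k (ln M) Hk Hln) as Hpoly.
  set (SM := invln_poly k (/ ln M)) in *; set (Sx := invln_poly k (/ ln x)) in *.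
  set (S2 := invln_poly k (/ (ln M + 0.6931472))) in *.
  assert (0 < SM) by (apply invln_poly_pos; assumption).
  assert (0 < S2) by (apply invln_poly_pos; assumption).
  assert (S2 <= Sx) by (apply msum_le_compat; [apply invln_monomials_nonneg | lra]).
  set (Bx := fN_numer L x) in *.
  assert (0 < 2 ^ k) by (apply pow_lt; lra).
  assert (HcM' : fN_core k L M <= Bx * SM).
  { assert (fN_numer L M * SM <= Bx * SM) by (apply Rmult_le_compat_r; lra). lra. }
  assert (Hcx' : (1 - / 20000000) * Bx * S2 <= fN_core k L x).
  { assert ((1 - / 20000000) * Bx * S2 <= (1 - / 20000000) * Bx * Sx)
      by (apply Rmult_le_compat_l; lra).
    assert ((1 - / 20000000) * Bx * Sx <= (Bx - 1/100) * Sx)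
      by (apply Rmult_le_compat_r; lra).
    lra. }
  assert (0 < gamma k) by (destruct k as [|[|[|[|[|[|[|k']]]]]]]; try lia; simpl; lra).
  assert (2 ^ k * fN_core k L M <= 2 ^ k * (Bx * SM)) by (apply Rmult_le_compat_l; lra).
  assert (Bx * (2 ^ k * SM) < Bx * (gamma k * (1 - / 20000000) * S2))
    by (apply Rmult_lt_compat_l; lra).
  assert (gamma k * ((1 - / 20000000) * Bx * S2) <= gamma k * fN_core k L x)
    by (apply Rmult_le_compat_l; lra).
  replace (2 ^ k * (fN_core k L M / fN_core k L x)) with (2 ^ k * fN_core k L M / fN_core k L x)
    by (unfold Rdiv; ring).
  apply (Rlt_div_l _ _ (fN_core k L x)); [apply fN_core_pos; [exact Hk | lra | lra] |].
  lra.
Qed.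

End Ratio.

Lemma fN_deriv_ratio k L M x :
  0 < M -> 0 < x -> fN_core k L x <> 0 ->
  fN_deriv k L M / fN_deriv k L x = (x / M) ^ k * (fN_core k L M / fN_core k L x).
Proof.
  intros HM Hx Hc; unfold fN_deriv, Rdiv.
  rewrite Rpow_mult_distr, pow_inv.
  assert ((-1) ^ k <> 0) by (apply pow_nonzero; lra).
  assert (M ^ k <> 0) by (apply pow_nonzero; lra).
  assert (x ^ k <> 0) by (apply pow_nonzero; lra).
  field; auto.
Qed.

Theorem lemma3p2 (N M : R) :
  IZR (10 ^ 100000)%Z <= N ->
  IZR (10 ^ 5)%Z <= M ->
  forall (x : R) (k : nat),
    M <= x <= 2 * M ->
    (1 <= k <= 6)%nat ->
    0.999999 < Derive_n (fN N) k M / Derive_n (fN N) k x < gamma k.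
Proof.
  intros HN HM x k Hx Hk.
  (* [lra] would try to evaluate the integer 10^100000 in HN. *)
  pose proof (ln_N_ge N HN) as HL; clear HN.
  assert (HM' : 100000 <= M) by (simpl in HM; lra).
  rewrite !Derive_n_fN by (assumption || lra).
  rewrite fN_deriv_ratio by (lra || (apply Rgt_not_eq, fN_core_pos; [assumption | lra | lra])).
  pose proof (fN_core_ratio_gt k (ln N) M x Hk HL HM' ltac:(lra)) as Hgt.
  pose proof (fN_core_ratio_lt k (ln N) M x Hk HL HM' ltac:(lra) ltac:(lra)) as Hlt.
  set (q := fN_core k (ln N) M / fN_core k (ln N) x) in *.
  assert (Hq : 0 < q) by lra.
  assert (HxM : 1 <= x / M <= 2)
    by (split; [apply Rle_div_r | apply Rle_div_l]; lra).
  assert (Hpow : 1 <= (x / M) ^ k <= 2 ^ k)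
    by (rewrite <- (pow1 k); split; apply pow_incr; lra).
  assert (q <= (x / M) ^ k * q) by (rewrite <- (Rmult_1_l q) at 1; apply Rmult_le_compat_r; lra).
  assert ((x / M) ^ k * q <= 2 ^ k * q) by (apply Rmult_le_compat_r; lra).
  lra.
Qed.
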